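(* Let $\mathcal C$ be a category, $n\ge0$, $0\le i\le n$, and let $f:A\to B$ be a zigzag map in $Z(\mathcal C)$ from a zigzag $A$ of length $n$ to a zigzag $B$ of length $n+1$ whose singular map is the face map $d_i:[n]\to[n+1]$ (so its regular slices are $f(r_j):A(r_j)\to B(r_j)$ for $j\le i$ and $f(r_j):A(r_{j-1})\to B(r_j)$ for $j\ge i+1$, and its singular slices are $f(s_j):A(s_j)\to B(s_{d_i(j)})$). Then $f$ is $\pi$-cartesian if and only if all singular slices $f(s_j)$ are isomorphisms in $\mathcal C$, all regular slices $f(r_j)$ with $j\notin\{i,i+1\}$ are isomorphisms in $\mathcal C$, and the commutative square formed by $f(r_i):A(r_i)\to B(r_i)$, $f(r_{i+1}):A(r_i)\to B(r_{i+1})$ and the cospan legs $b_i:B(r_i)\to B(s_i)$, $b'_i:B(r_{i+1})\to B(s_i)$ is a pullback square in $\mathcal C$.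
   Context: Notation: for $n\ge 0$, $[n]$ denotes $\{0,\dots,n-1\}$; $\Delta_+$ is the category of these finite total orders and order-preserving maps. The $i$-th face map $d_i:[n]\to[n+1]$ is the unique injective order-preserving map omitting $i$ from its image. For monotone $\varphi:[n]\to[m]$ define $\hat\varphi:[m+1]\to[n+1]$ by $\hat\varphi(i)=\min(\{j\in[n]:\varphi(j)\ge i\}\cup\{n\})$. Zigzags: in a category $\mathcal C$, a zigzag $X$ of length $n$ is a diagram $X(r_0)\xrightarrow{x_0} X(s_0)\xleftarrow{x'_0} X(r_1)\to\cdots\xrightarrow{x_{n-1}} X(s_{n-1})\xleftarrow{x'_{n-1}} X(r_n)$. A zigzag map $f:X\to Y$ (lengths $n$, $m$) consists of a monotone $f_s:[n]\to[m]$ (singular map), regular slices $f(r_i):X(r_{\hat{f_s}(i)})\to Y(r_i)$ for $0\le i\le m$ and singular slices $f(s_j):X(s_j)\to Y(s_{f_s(j)})$ for $0\le j<n$, such that for each $0\le i<m$: if $f_s^{-1}(i)\neq\emptyset$ with least element $p$, greatest $q$, then $f(s_p)\circ x_p=y_i\circ f(r_i)$, $f(s_q)\circ x'_q=y'_i\circ f(r_{i+1})$, $f(s_j)\circ x'_j=f(s_{j+1})\circ x_{j+1}$ for $p\le j<q$; if $f_s^{-1}(i)=\emptyset$ then $y_i\circ f(r_i)=y'_i\circ f(r_{i+1})$. Composition: $(g\circ f)_s=g_s\circ f_s$, $(g\circ f)(s_j)=g(s_{f_s(j)})\circ f(s_j)$, $(g\circ f)(r_i)=g(r_i)\circ f(r_{\hat{g_s}(i)})$.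 This gives the category $Z(\mathcal C)$. The functor $\pi:Z(\mathcal C)\to\Delta_+$ sends a zigzag of length $n$ to $[n]$ and $f$ to $f_s$. A map $f:x\to y$ is $\pi$-cartesian if for every map $h:x'\to y$ and every $u:\pi(x')\to\pi(x)$ with $\pi(f)\circ u=\pi(h)$ there is a unique $v:x'\to x$ with $f\circ v=h$ and $\pi(v)=u$. *)

From mathcomp Require Import all_boot.
Set Implicit Arguments.
Unset Strict Implicit.
Unset Printing Implicit Defensive.

(* comp g f denotes g \o f; the axioms are required only for          *)
(* composable pairs (the value of comp on non-composable pairs is      *)
(* irrelevant junk).                                                   *)
Record Category := {
  Ob : Type;
  Mor : Type;
  dom : Mor -> Ob;
  cod : Mor -> Ob;
  idm : Ob -> Mor;
  comp : Mor -> Mor -> Mor;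
  dom_idm : forall a, dom (idm a) = a;
  cod_idm : forall a, cod (idm a) = a;
  dom_comp : forall f g, cod f = dom g -> dom (comp g f) = dom f;
  cod_comp : forall f g, cod f = dom g -> cod (comp g f) = cod g;
  comp_idl : forall f, comp (idm (cod f)) f = f;
  comp_idr : forall f, comp f (idm (dom f)) = f;
  compA : forall f g h, cod f = dom g -> cod g = dom h ->
            comp h (comp g f) = comp (comp h g) f
}.

Arguments dom {c} _.
Arguments cod {c} _.
Arguments idm {c} _.
Arguments comp {c} _ _.

Definition is_iso (C : Category) (f : Mor C) : Prop :=
  exists g : Mor C, dom g = cod f /\ cod g = dom f /\
    comp g f = idm (dom f) /\ comp f g = idm (cod f).

Definition is_pullback (C : Category) (p1 p2 g1 g2 : Mor C) : Prop :=
  [/\ dom p1 = dom p2, cod p1 = dom g1, cod p2 = dom g2 & cod g1 = cod g2] /\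
  comp g1 p1 = comp g2 p2 /\
  forall q1 q2 : Mor C, dom q1 = dom q2 -> cod q1 = dom g1 ->
    cod q2 = dom g2 -> comp g1 q1 = comp g2 q2 ->
    exists u : Mor C,
      [/\ dom u = dom q1, cod u = dom p1, comp p1 u = q1, comp p2 u = q2 &
          forall u' : Mor C, dom u' = dom q1 -> cod u' = dom p1 ->
            comp p1 u' = q1 -> comp p2 u' = q2 -> u' = u].

(* Zigzags of length n:                                                *)
(*   X(r_0) -x_0-> X(s_0) <-x'_0- X(r_1) -> ... <-x'_{n-1}- X(r_n)     *)
Record zigzag (C : Category) (n : nat) := {
  zr : 'I_n.+1 -> Ob C;
  zs : 'I_n -> Ob C;
  zx : 'I_n -> Mor C;
  zx' : 'I_n -> Mor C;
  zx_dom : forall j, dom (zx j) = zr (widen_ord (leqnSn n) j);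
  zx_cod : forall j, cod (zx j) = zs j;
  zx'_dom : forall j, dom (zx' j) = zr (lift ord0 j);
  zx'_cod : forall j, cod (zx' j) = zs j
}.

Definition monotone (n m : nat) (phi : 'I_n -> 'I_m) : Prop :=
  forall a b : 'I_n, a <= b -> phi a <= phi b.

(* hat phi (i) = min ({ j in [n] | phi j >= i } U {n}) *)
Definition hat (n m : nat) (phi : 'I_n -> 'I_m) (i : 'I_m.+1) : 'I_n.+1 :=
  inord (find (fun j : 'I_n => i <= phi j) (enum 'I_n)).

Record zmap (C : Category) (n m : nat) (X : zigzag C n) (Y : zigzag C m) := {
  zm_s : 'I_n -> 'I_m;
  zm_reg : 'I_m.+1 -> Mor C;
  zm_sing : 'I_n -> Mor C;
  zm_mono : monotone zm_s;
  zm_reg_dom : forall i, dom (zm_reg i) = zr X (hat zm_s i);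
  zm_reg_cod : forall i, cod (zm_reg i) = zr Y i;
  zm_sing_dom : forall j, dom (zm_sing j) = zs X j;
  zm_sing_cod : forall j, cod (zm_sing j) = zs Y (zm_s j);
  zm_least : forall (i : 'I_m) (p : 'I_n), zm_s p = i ->
      (forall j, zm_s j = i -> p <= j) ->
      comp (zm_sing p) (zx X p) = comp (zx Y i) (zm_reg (widen_ord (leqnSn m) i));
  zm_greatest : forall (i : 'I_m) (q : 'I_n), zm_s q = i ->
      (forall j, zm_s j = i -> j <= q) ->
      comp (zm_sing q) (zx' X q) = comp (zx' Y i) (zm_reg (lift ord0 i));
  zm_middle : forall (i : 'I_m) (j j1 : 'I_n), val j1 = (val j).+1 ->
      zm_s j = i -> zm_s j1 = i ->
      comp (zm_sing j) (zx' X j) = comp (zm_sing j1) (zx X j1);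
  zm_empty : forall i : 'I_m, (forall j, zm_s j <> i) ->
      comp (zx Y i) (zm_reg (widen_ord (leqnSn m) i)) =
      comp (zx' Y i) (zm_reg (lift ord0 i))
}.

(* "f \o v = h" in Z(C), written out componentwise via the composition
   formulas (g o f)_s = g_s o f_s, (g o f)(s_j) = g(s_{f_s j}) o f(s_j),
   (g o f)(r_i) = g(r_i) o f(r_{hat g_s i}). *)
Definition zcomp_eq (C : Category) (k n m : nat) (X' : zigzag C k)
    (X : zigzag C n) (Y : zigzag C m)
    (f : zmap X Y) (v : zmap X' X) (h : zmap X' Y) : Prop :=
  [/\ forall j, zm_s h j = zm_s f (zm_s v j),
      forall j, zm_sing h j = comp (zm_sing f (zm_s v j)) (zm_sing v j) &
      forall i, zm_reg h i = comp (zm_reg f i) (zm_reg v (hat (zm_s f) i))].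

Definition pi_cartesian (C : Category) (n m : nat) (X : zigzag C n)
    (Y : zigzag C m) (f : zmap X Y) : Prop :=
  forall (k : nat) (X' : zigzag C k) (h : zmap X' Y) (u : 'I_k -> 'I_n),
    monotone u -> (forall j, zm_s f (u j) = zm_s h j) ->
    exists v : zmap X' X,
      [/\ zcomp_eq f v h, zm_s v =1 u &
          forall v' : zmap X' X, zcomp_eq f v' h -> zm_s v' =1 u -> v' = v].

From mathcomp Require Import all_boot zify.
From Stdlib Require Import ProofIrrelevance FunctionalExtensionality IndefiniteDescription.

(** The singular map of [f] is the face map [d_i], whose hat is the codegeneracy [s_i]
    identifying [i] and [i+1]; [lift (lift ord0 i)] is the section of [s_i] missing [i+1], so
    every regular slice of [B] other than [r_i] and [r_{i+1}] lies over exactly one regular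
    slice of [A].

    Sufficiency: a lift of [h] along [u] is forced slice by slice, by inverting the slices of
    [f] except at [r_i], where the pullback property provides it; the equations making it a
    zigzag map follow by cancelling the isomorphisms [f(s_j)].

    Necessity: collapsing the cospan [B(r_i) -> B(s_i) <- B(r_{i+1})] into a commuting span out
    of some [P] gives a zigzag of length [n] mapping to [B] over [d_i], by identities away from
    the span. For the span [f(r_i), f(r_{i+1})], [f] factors through that map, and uniqueness of
    lifts along the identity makes the lift of the map inverse to [f] slicewise. For any other
    commuting span, the slice at [r_i] of the lift is the mediating arrow; it is unique because
    replacing it by another factorization yields a second lift. *)

Set Implicit Arguments.
Unset Strict Implicit.
Unset Printing Implicit Defensive.

Section Hat.
Variables (n m : nat) (phi : 'I_n -> 'I_m).
Hypothesis phi_mono : monotone phi.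

Lemma hat_leq (l : 'I_m.+1) (k : 'I_n) : (hat phi l <= k) = (l <= phi k).
Proof.
rewrite /hat inordK; last by rewrite ltnS -[n in _ <= n]size_enum_ord find_size.
set P := fun j : 'I_n => l <= phi j.
apply/idP/idP => [le_find_k | le_l_phik].
- have lt_find : find P (enum 'I_n) < n by apply: leq_ltn_trans le_find_k _.
  have /(nth_find k) : has P (enum 'I_n) by rewrite has_find size_enum_ord.
  rewrite /P (nth_ord_enum k (Ordinal lt_find)) => /leq_trans; apply.
  exact: phi_mono.
- rewrite leqNgt; apply/negP => /(before_find k).
  by rewrite nth_ord_enum /P le_l_phik.
Qed.

Lemma hat_eq (l : 'I_m.+1) (c : nat) : c <= n ->
  (forall k : 'I_n, (c <= k) = (l <= phi k)) -> hat phi l = c :> nat.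
Proof.
move=> le_c_n c_thr; have le_hat_n : hat phi l <= n by rewrite -ltnS.
apply/eqP; rewrite eqn_leq; apply/andP; split.
- case: ltnP => // lt_c_hat; have lt_c : c < n by lia.
  by move: (c_thr (Ordinal lt_c)); rewrite -hat_leq /= leqnn leqNgt lt_c_hat.
- case: ltnP => // lt_hat_c; have lt_hat : hat phi l < n by lia.
  by move: (c_thr (Ordinal lt_hat)); rewrite -hat_leq /= leqnn leqNgt lt_hat_c.
Qed.

End Hat.

Lemma hat_ext n m (phi psi : 'I_n -> 'I_m) : phi =1 psi -> hat phi =1 hat psi.
Proof. by move=> e l; rewrite /hat; congr inord; apply: eq_find => j; rewrite /= e. Qed.

Lemma monotone_id n : monotone (fun j : 'I_n => j).
Proof. by []. Qed.

Lemma monotone_lift n (i : 'I_n.+1) : monotone (lift i).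
Proof. by move=> a b /= le_ab; rewrite /bump; lia. Qed.

Lemma hat_id n (phi : 'I_n -> 'I_n) : (forall j, phi j = j) -> forall l, hat phi l = l.
Proof.
move=> phi_id l; apply: ord_inj; rewrite (hat_ext phi_id l); apply: hat_eq => //.
by rewrite -ltnS ltn_ord.
Qed.

Lemma hat_comp k n m (u : 'I_k -> 'I_n) (d : 'I_n -> 'I_m) (l : 'I_m.+1) :
  monotone u -> monotone d -> hat (fun j => d (u j)) l = hat u (hat d l).
Proof.
move=> u_mono d_mono; apply: val_inj; apply: hat_eq.
- by move=> a b le_ab; apply/d_mono/u_mono.
- by rewrite -ltnS ltn_ord.
- by move=> j; rewrite !hat_leq.
Qed.

Lemma hat_lift n (i : 'I_n.+1) (l : 'I_n.+2) :
  hat (lift i) l = (if l <= i then (l : nat) else l.-1) :> nat.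
Proof.
have := ltn_ord l; have := ltn_ord i => lt_i lt_l.
apply: hat_eq; first exact: monotone_lift.
- by case: ifP; lia.
- by move=> k /=; rewrite /bump; case: ifP; lia.
Qed.

Section FaceIndex.
Variables (n : nat) (i : 'I_n.+1).

Lemma hat_lift_widen (j : 'I_n) :
  hat (lift i) (widen_ord (leqnSn n.+1) (lift i j)) = widen_ord (leqnSn n) j.
Proof. by apply: ord_inj; rewrite hat_lift /= /bump; case: ifP; lia. Qed.

Lemma hat_lift_lift0 (j : 'I_n) : hat (lift i) (lift ord0 (lift i j)) = lift ord0 j.
Proof. by apply: ord_inj; rewrite hat_lift /= /bump; case: ifP; lia. Qed.

Lemma hat_lift_widen_i : hat (lift i) (widen_ord (leqnSn n.+1) i) = i.
Proof. by apply: ord_inj; rewrite hat_lift /= leqnn. Qed.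

Lemma hat_lift_lift0_i : hat (lift i) (lift ord0 i) = i.
Proof. by apply: ord_inj; rewrite hat_lift /= /bump; case: ifP; lia. Qed.

Lemma hat_lift_section (l : 'I_n.+1) : hat (lift i) (lift (lift ord0 i) l) = l.
Proof. by apply: ord_inj; rewrite hat_lift /= /bump; case: ifP; lia. Qed.

Lemma lift_hat_lift (l' : 'I_n.+2) :
  l' != lift ord0 i -> lift (lift ord0 i) (hat (lift i) l') = l'.
Proof.
rewrite -val_eqE /= /bump => ne; apply: ord_inj; rewrite /= hat_lift /bump.
by case: ifP; lia.
Qed.

Lemma hat_lift_eq_i (l' : 'I_n.+2) :
  (hat (lift i) l' == i) = (l' == widen_ord (leqnSn n.+1) i) || (l' == lift ord0 i).
Proof. by rewrite -!val_eqE /= hat_lift /bump; case: ifP; lia. Qed.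

Lemma widen_lift_eq_lift0 (j : 'I_n) :
  (widen_ord (leqnSn n.+1) (lift i j) == lift ord0 i) = (widen_ord (leqnSn n) j == i).
Proof. by rewrite -!val_eqE /= /bump; lia. Qed.

Lemma lift0_lift_eq_widen (j : 'I_n) :
  (lift ord0 (lift i j) == widen_ord (leqnSn n.+1) i) = (lift ord0 j == i).
Proof. by rewrite -!val_eqE /= /bump; lia. Qed.

Lemma widen_lift_neq_widen (j : 'I_n) :
  widen_ord (leqnSn n.+1) (lift i j) != widen_ord (leqnSn n.+1) i.
Proof. by rewrite -!val_eqE /= /bump; lia. Qed.

Lemma lift0_lift_neq_lift0 (j : 'I_n) : lift ord0 (lift i j) != lift ord0 i.
Proof. by rewrite -!val_eqE /= /bump; lia. Qed.

Lemma lift_widen (j : 'I_n) : widen_ord (leqnSn n) j != i ->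
  lift (lift ord0 i) (widen_ord (leqnSn n) j) = widen_ord (leqnSn n.+1) (lift i j).
Proof. by rewrite -val_eqE /= => ne; apply: ord_inj; rewrite /= /bump; lia. Qed.

Lemma lift_lift0 (j : 'I_n) : lift ord0 j != i ->
  lift (lift ord0 i) (lift ord0 j) = lift ord0 (lift i j).
Proof. by rewrite -val_eqE /= /bump => ne; apply: ord_inj; rewrite /= /bump; lia. Qed.

Lemma lift0_neq_widen : (lift ord0 i == widen_ord (leqnSn n.+1) i) = false.
Proof. by rewrite -val_eqE /= /bump; lia. Qed.

Lemma hat_lift_fibre (l' : 'I_n.+2) (l : 'I_n.+1) :
  hat (lift i) l' = l -> l != i -> l' = lift (lift ord0 i) l.
Proof.
move=> <- /negbTE ne_i; rewrite lift_hat_lift //; apply: contraFN ne_i => /eqP ->.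
by rewrite hat_lift_lift0_i.
Qed.

End FaceIndex.

Section CategoryFacts.
Variable C : Category.
Implicit Types (a : Ob C) (f g x y : Mor C).

Lemma comp_id_l a g : cod g = a -> comp (idm a) g = g.
Proof. by move=> <-; apply: comp_idl. Qed.

Lemma comp_id_r a g : dom g = a -> comp g (idm a) = g.
Proof. by move=> <-; apply: comp_idr. Qed.

Lemma iso_monic f x y : is_iso f -> cod x = dom f -> cod y = dom f ->
  comp f x = comp f y -> x = y.
Proof.
move=> [g [dom_g [cod_g [gf _]]]] cod_x cod_y fx_fy.
have cancel z : cod z = dom f -> comp g (comp f z) = z.
  by move=> cod_z; rewrite compA ?dom_g // gf -cod_z comp_idl.
by rewrite -(cancel x) // fx_fy cancel.
Qed.

Lemma iso_factor f y : is_iso f -> cod y = cod f ->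
  exists x, [/\ dom x = dom y, cod x = dom f & comp f x = y].
Proof.
move=> [g [dom_g [cod_g [_ fg]]]] cod_y; exists (comp g y); split.
- by rewrite dom_comp // dom_g.
- by rewrite cod_comp // dom_g.
- by rewrite compA ?dom_g // fg -cod_y comp_idl.
Qed.

Lemma iso_monic_comp m g x y : is_iso m -> cod x = dom g -> cod y = dom g -> cod g = dom m ->
  comp (comp m g) x = comp (comp m g) y -> comp g x = comp g y.
Proof.
move=> m_iso cod_x cod_y cod_g; rewrite -!compA // => mgx_mgy.
by apply: (iso_monic m_iso); rewrite ?cod_comp.
Qed.

Lemma comp_eq_postcomp g f x y : cod x = dom f -> cod y = dom f -> cod f = dom g ->
  comp f x = comp f y -> comp (comp g f) x = comp (comp g f) y.
Proof. by move=> cod_x cod_y cod_f fx_fy; rewrite -!compA // fx_fy. Qed.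

End CategoryFacts.

Create HintDb arrows.
#[global] Hint Rewrite @dom_idm @cod_idm @zx_dom @zx_cod @zx'_dom @zx'_cod
  @zm_reg_dom @zm_reg_cod @zm_sing_dom @zm_sing_cod : arrows.

Ltac arrow_simpl :=
  autorewrite with arrows;
  repeat match goal with
  | vert : forall j, zm_s _ j = j |- _ => progress rewrite ?vert ?(hat_id vert)
  end.

Ltac arrows :=
  arrow_simpl;
  repeat (first [rewrite dom_comp; [|by arrows] | rewrite cod_comp; [|by arrows]];
          arrow_simpl);
  try done.

Ltac reassoc_l := rewrite compA; [|by arrows|by arrows].
Ltac reassoc_r := rewrite -compA; [|by arrows|by arrows].

Section Zmaps.
Variable C : Category.

Lemma zmap_ext n m (X : zigzag C n) (Y : zigzag C m) (v v' : zmap X Y) :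
  zm_s v =1 zm_s v' -> zm_reg v =1 zm_reg v' -> zm_sing v =1 zm_sing v' -> v = v'.
Proof.
case: v => s r g ? ? ? ? ? ? ? ? ?; case: v' => s' r' g' ? ? ? ? ? ? ? ? ? /=.
move=> /functional_extensionality es /functional_extensionality er.
move=> /functional_extensionality eg; subst s' r' g'.
by f_equal; apply: proof_irrelevance.
Qed.

Section InjectiveSingular.
Variables (n m : nat) (X : zigzag C n) (Y : zigzag C m) (f : zmap X Y).
Hypothesis f_inj : injective (zm_s f).

Lemma zm_least_inj j : comp (zm_sing f j) (zx X j) =
  comp (zx Y (zm_s f j)) (zm_reg f (widen_ord (leqnSn m) (zm_s f j))).
Proof. by apply: zm_least => // j' /f_inj ->. Qed.

Lemma zm_greatest_inj j : comp (zm_sing f j) (zx' X j) =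
  comp (zx' Y (zm_s f j)) (zm_reg f (lift ord0 (zm_s f j))).
Proof. by apply: zm_greatest => // j' /f_inj ->. Qed.

End InjectiveSingular.

Definition zid n (X : zigzag C n) : zmap X X.
Proof.
refine (@Build_zmap _ _ _ X X (fun j => j) (fun l => idm (zr X l))
  (fun j => idm (zs X j)) (@monotone_id n) _ _ _ _ _ _ _ _).
- by move=> l; rewrite dom_idm hat_id.
- by move=> l; rewrite cod_idm.
- by move=> j; rewrite dom_idm.
- by move=> j; rewrite cod_idm.
- by move=> i0 p <- _; rewrite comp_id_l ?comp_id_r; arrows.
- by move=> i0 q <- _; rewrite comp_id_l ?comp_id_r; arrows.
- by move=> i0 j j1 succ_j /= ej ej1; move: succ_j; rewrite ej ej1; lia.
- by move=> i0 /(_ i0).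
Defined.

Lemma zcomp_eq_id n m (X : zigzag C n) (Y : zigzag C m) (f : zmap X Y) :
  zcomp_eq f (zid X) f.
Proof. by split=> //= l; rewrite comp_id_r; arrows. Qed.

Section Vertical.
Variables (k n : nat) (X : zigzag C k) (Y Z : zigzag C n).
Variables (g : zmap Y Z) (f : zmap X Y).
Hypothesis g_vert : forall j, zm_s g j = j.

Let g_inj : injective (zm_s g).
Proof. by move=> a b; rewrite !g_vert. Qed.

Let g_least j : comp (zm_sing g j) (zx Y j) =
  comp (zx Z j) (zm_reg g (widen_ord (leqnSn n) j)).
Proof. by rewrite (zm_least_inj g_inj) g_vert. Qed.

Let g_greatest j : comp (zm_sing g j) (zx' Y j) =
  comp (zx' Z j) (zm_reg g (lift ord0 j)).
Proof. by rewrite (zm_greatest_inj g_inj) g_vert. Qed.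

Definition vcomp : zmap X Z.
Proof.
refine (@Build_zmap _ _ _ X Z (zm_s f) (fun l => comp (zm_reg g l) (zm_reg f l))
  (fun j => comp (zm_sing g (zm_s f j)) (zm_sing f j)) (zm_mono f) _ _ _ _ _ _ _ _).
- by move=> l; arrows.
- by move=> l; arrows.
- by move=> j; arrows.
- by move=> j; arrows.
- move=> i0 p fp p_least; reassoc_r; rewrite (zm_least fp p_least) fp.
  by reassoc_l; rewrite g_least; reassoc_r.
- move=> i0 q fq q_greatest; reassoc_r; rewrite (zm_greatest fq q_greatest) fq.
  by reassoc_l; rewrite g_greatest; reassoc_r.
- move=> i0 j j1 succ_j fj fj1; reassoc_r; rewrite (zm_middle succ_j fj fj1).
  by rewrite fj -fj1; reassoc_l.
- move=> i0 not_im; reassoc_l; rewrite -g_least; reassoc_r.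
  by rewrite (zm_empty not_im); reassoc_l; rewrite g_greatest; reassoc_r.
Defined.

End Vertical.

Lemma zcomp_eq_vcomp k n m (X'' : zigzag C k) (X' X : zigzag C n) (Y : zigzag C m)
    (f : zmap X Y) (v : zmap X' X) (h : zmap X' Y) (w : zmap X'' X') (h' : zmap X'' Y)
    (v_vert : forall j, zm_s v j = j) :
  zcomp_eq f v h -> zcomp_eq h w h' -> zcomp_eq f (vcomp w v_vert) h'.
Proof.
move=> [hs hsing hreg] [h's h'sing h'reg]; split=> /=.
- by move=> j; rewrite h's hs v_vert.
- by move=> j; rewrite h'sing hsing v_vert; reassoc_r.
- move=> l; rewrite h'reg hreg (hat_ext hs) (hat_ext (fun j => congr1 _ (v_vert j))).
  by reassoc_r.
Qed.

Lemma zmap_update_reg k n (X : zigzag C k) (Y : zigzag C n) (v : zmap X Y)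
    (l0 : 'I_n.+1) (w : Mor C) :
  dom w = dom (zm_reg v l0) -> cod w = cod (zm_reg v l0) ->
  (forall j, widen_ord (leqnSn n) j = l0 -> comp (zx Y j) w = comp (zx Y j) (zm_reg v l0)) ->
  (forall j, lift ord0 j = l0 -> comp (zx' Y j) w = comp (zx' Y j) (zm_reg v l0)) ->
  exists v' : zmap X Y, [/\ zm_s v' = zm_s v, zm_sing v' = zm_sing v &
    forall l, zm_reg v' l = if l == l0 then w else zm_reg v l].
Proof.
move=> dom_w cod_w x_w x'_w; set r := fun l => if l == l0 then w else zm_reg v l.
have r_dom l : dom (r l) = zr X (hat (zm_s v) l).
  by rewrite /r; case: eqP => [->|_]; rewrite ?dom_w; arrows.
have r_cod l : cod (r l) = zr Y l.
  by rewrite /r; case: eqP => [->|_]; rewrite ?cod_w; arrows.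
have r_x j : comp (zx Y j) (r (widen_ord (leqnSn n) j)) =
             comp (zx Y j) (zm_reg v (widen_ord (leqnSn n) j)).
  by rewrite /r; case: eqP => // e; rewrite x_w // e.
have r_x' j : comp (zx' Y j) (r (lift ord0 j)) = comp (zx' Y j) (zm_reg v (lift ord0 j)).
  by rewrite /r; case: eqP => // e; rewrite x'_w // e.
have r_least i0 p : zm_s v p = i0 -> (forall j, zm_s v j = i0 -> p <= j) ->
    comp (zm_sing v p) (zx X p) = comp (zx Y i0) (r (widen_ord (leqnSn n) i0)).
  by move=> vp p_least; rewrite r_x; apply: zm_least.
have r_greatest i0 q : zm_s v q = i0 -> (forall j, zm_s v j = i0 -> j <= q) ->
    comp (zm_sing v q) (zx' X q) = comp (zx' Y i0) (r (lift ord0 i0)).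
  by move=> vq q_greatest; rewrite r_x'; apply: zm_greatest.
have r_empty i0 : (forall j, zm_s v j <> i0) ->
    comp (zx Y i0) (r (widen_ord (leqnSn n) i0)) = comp (zx' Y i0) (r (lift ord0 i0)).
  by move=> not_im; rewrite r_x r_x'; apply: zm_empty.
by exists (Build_zmap (zm_mono v) r_dom r_cod (@zm_sing_dom _ _ _ _ _ v)
  (@zm_sing_cod _ _ _ _ _ v) r_least r_greatest (@zm_middle _ _ _ _ _ v) r_empty).
Qed.

Lemma cartesian_lift_unique k n m (X' : zigzag C k) (X : zigzag C n) (Y : zigzag C m)
    (f : zmap X Y) (h : zmap X' Y) (v1 v2 : zmap X' X) :
  pi_cartesian f -> zcomp_eq f v1 h -> zcomp_eq f v2 h -> zm_s v1 =1 zm_s v2 -> v1 = v2.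
Proof.
move=> f_cart v1h v2h v12.
have [hs1 _ _] := v1h.
have [v [_ _ v_unique]] := f_cart _ _ h _ (zm_mono v1) (fun j => esym (hs1 j)).
by rewrite (v_unique v1) // (v_unique v2).
Qed.

End Zmaps.

(* [B] with the cospan at [s_i] replaced by the span [q1 : P -> B(r_i)],
   [q2 : P -> B(r_{i+1})]. *)
Section Collapse.
Variables (C : Category) (n : nat) (i : 'I_n.+1) (B : zigzag C n.+1).
Variables (P : Ob C) (q1 q2 : Mor C).
Hypotheses (q1_dom : dom q1 = P) (q2_dom : dom q2 = P).
Hypotheses (q1_cod : cod q1 = zr B (widen_ord (leqnSn n.+1) i))
           (q2_cod : cod q2 = zr B (lift ord0 i)).

Definition collapse_r (l : 'I_n.+1) : Ob C :=
  if l == i then P else zr B (lift (lift ord0 i) l).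

Definition collapse_x (j : 'I_n) : Mor C :=
  if widen_ord (leqnSn n) j == i then comp (zx B (lift i j)) q2 else zx B (lift i j).

Definition collapse_x' (j : 'I_n) : Mor C :=
  if lift ord0 j == i then comp (zx' B (lift i j)) q1 else zx' B (lift i j).

Let q2_zx j : widen_ord (leqnSn n) j = i -> cod q2 = dom (zx B (lift i j)).
Proof.
move=> e; rewrite q2_cod zx_dom; congr (zr B _); apply/esym/eqP.
by rewrite widen_lift_eq_lift0 e.
Qed.

Let q1_zx' j : lift ord0 j = i -> cod q1 = dom (zx' B (lift i j)).
Proof.
move=> e; rewrite q1_cod zx'_dom; congr (zr B _); apply/esym/eqP.
by rewrite lift0_lift_eq_widen e.
Qed.

Lemma collapse_x_dom j : dom (collapse_x j) = collapse_r (widen_ord (leqnSn n) j).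
Proof.
rewrite /collapse_x /collapse_r; case: eqP => [e | /eqP ne].
- by rewrite dom_comp ?q2_dom //; apply: q2_zx.
- by rewrite zx_dom lift_widen.
Qed.

Lemma collapse_x_cod j : cod (collapse_x j) = zs B (lift i j).
Proof.
by rewrite /collapse_x; case: eqP => [e|_]; rewrite ?cod_comp ?zx_cod //; apply: q2_zx.
Qed.

Lemma collapse_x'_dom j : dom (collapse_x' j) = collapse_r (lift ord0 j).
Proof.
rewrite /collapse_x' /collapse_r; case: eqP => [e | /eqP ne].
- by rewrite dom_comp ?q1_dom //; apply: q1_zx'.
- by rewrite zx'_dom lift_lift0.
Qed.

Lemma collapse_x'_cod j : cod (collapse_x' j) = zs B (lift i j).
Proof.
by rewrite /collapse_x'; case: eqP => [e|_]; rewrite ?cod_comp ?zx'_cod //; apply: q1_zx'.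
Qed.

Definition collapse : zigzag C n :=
  Build_zigzag collapse_x_dom collapse_x_cod collapse_x'_dom collapse_x'_cod.

Lemma collapse_r_i : zr collapse i = P.
Proof. by rewrite /= /collapse_r eqxx. Qed.

Definition collapse_reg (l' : 'I_n.+2) : Mor C :=
  if l' == widen_ord (leqnSn n.+1) i then q1
  else if l' == lift ord0 i then q2 else idm (zr B l').

Hypothesis q_square : comp (zx B i) q1 = comp (zx' B i) q2.

Definition collapse_map : zmap collapse B.
Proof.
refine (@Build_zmap _ _ _ collapse B (lift i) collapse_reg (fun j => idm (zs B (lift i j)))
  (@monotone_lift n i) _ _ _ _ _ _ _ _).
- move=> l'; rewrite /collapse_reg /= /collapse_r hat_lift_eq_i.
  case: eqP => [_|_] /=; first exact: q1_dom.
  case: eqP => [_|/eqP ne] /=; first exact: q2_dom.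
  by rewrite dom_idm lift_hat_lift.
- move=> l'; rewrite /collapse_reg.
  by case: eqP => [->|_]; last case: eqP => [->|_]; rewrite ?cod_idm.
- by move=> j; rewrite dom_idm.
- by move=> j; rewrite cod_idm.
- move=> i1 p <- _; rewrite comp_id_l ?collapse_x_cod //= /collapse_reg /collapse_x.
  rewrite (negbTE (widen_lift_neq_widen i p)) widen_lift_eq_lift0.
  by case: ifP => _ //; rewrite comp_id_r ?zx_dom.
- move=> i1 q <- _; rewrite comp_id_l ?collapse_x'_cod //= /collapse_reg /collapse_x'.
  rewrite lift0_lift_eq_widen (negbTE (lift0_lift_neq_lift0 i q)).
  by case: ifP => _ //; rewrite comp_id_r ?zx'_dom.
- by move=> i1 j j1 succ_j <- /lift_inj e; move: succ_j; rewrite e; lia.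
- move=> i1; case: (unliftP i i1) => [j -> /(_ j) // | -> _].
  by rewrite /collapse_reg eqxx lift0_neq_widen eqxx.
Defined.

End Collapse.

Section FaceMap.
Variables (C : Category) (n : nat) (i : 'I_n.+1).
Variables (A : zigzag C n) (B : zigzag C n.+1) (f : zmap A B).
Hypothesis f_face : zm_s f =1 lift i.

Lemma hat_face l' : hat (zm_s f) l' = hat (lift i) l'.
Proof. exact: hat_ext. Qed.

#[local] Hint Rewrite f_face hat_face hat_lift_widen hat_lift_lift0 hat_lift_widen_i
  hat_lift_lift0_i hat_lift_section : arrows.

Lemma face_inj : injective (zm_s f).
Proof. by move=> a b; rewrite !f_face; apply: lift_inj. Qed.

Lemma face_least j : comp (zm_sing f j) (zx A j) =
  comp (zx B (lift i j)) (zm_reg f (widen_ord (leqnSn n.+1) (lift i j))).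
Proof. by rewrite zm_least_inj ?f_face //; apply: face_inj. Qed.

Lemma face_greatest j : comp (zm_sing f j) (zx' A j) =
  comp (zx' B (lift i j)) (zm_reg f (lift ord0 (lift i j))).
Proof. by rewrite zm_greatest_inj ?f_face //; apply: face_inj. Qed.

Lemma face_square : comp (zx B i) (zm_reg f (widen_ord (leqnSn n.+1) i)) =
  comp (zx' B i) (zm_reg f (lift ord0 i)).
Proof. by apply: zm_empty => j; rewrite f_face => /esym/eqP; rewrite (negbTE (neq_lift i j)). Qed.

Lemma legs_at_i_eq (sing_iso : forall j, is_iso (zm_sing f j)) x y :
  cod x = zr A i -> cod y = zr A i ->
  comp (zm_reg f (widen_ord (leqnSn n.+1) i)) x = comp (zm_reg f (widen_ord (leqnSn n.+1) i)) y ->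
  comp (zm_reg f (lift ord0 i)) x = comp (zm_reg f (lift ord0 i)) y ->
  (forall j, widen_ord (leqnSn n) j = i -> comp (zx A j) x = comp (zx A j) y) /\
  (forall j, lift ord0 j = i -> comp (zx' A j) x = comp (zx' A j) y).
Proof.
move=> cod_x cod_y fx1 fx2; split=> j e.
- have e' : widen_ord (leqnSn n.+1) (lift i j) = lift ord0 i.
    by apply/eqP; rewrite widen_lift_eq_lift0 e.
  apply: (iso_monic_comp (sing_iso j)); rewrite ?cod_x ?cod_y ?zx_dom ?e; try by arrows.
  rewrite face_least e'; apply: comp_eq_postcomp fx2; rewrite ?cod_x ?cod_y; arrows.
  by rewrite e'.
- have e' : lift ord0 (lift i j) = widen_ord (leqnSn n.+1) i.
    by apply/eqP; rewrite lift0_lift_eq_widen e.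
  apply: (iso_monic_comp (sing_iso j)); rewrite ?cod_x ?cod_y ?zx'_dom ?e; try by arrows.
  rewrite face_greatest e'; apply: comp_eq_postcomp fx1; rewrite ?cod_x ?cod_y; arrows.
  by rewrite e'.
Qed.

Section Sufficiency.
Hypothesis sing_iso : forall j, is_iso (zm_sing f j).
Hypothesis reg_iso : forall l' : 'I_n.+2, val l' <> val i -> val l' <> (val i).+1 ->
  is_iso (zm_reg f l').
Hypothesis square_pullback :
  is_pullback (zm_reg f (widen_ord (leqnSn n.+1) i)) (zm_reg f (lift ord0 i))
              (zx B i) (zx' B i).

Section Lifting.
Variables (k : nat) (X : zigzag C k) (h : zmap X B) (u : 'I_k -> 'I_n).
Hypotheses (u_mono : monotone u) (f_u : forall j, zm_s f (u j) = zm_s h j).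

Lemma h_face j : zm_s h j = lift i (u j).
Proof. by rewrite -f_u f_face. Qed.

Lemma hat_h l' : hat (zm_s h) l' = hat u (hat (lift i) l').
Proof.
by rewrite (hat_ext h_face) hat_comp //; apply: monotone_lift.
Qed.

#[local] Hint Rewrite h_face hat_h : arrows.

Definition sing_factors j x : Prop :=
  [/\ dom x = zs X j, cod x = zs A (u j) & comp (zm_sing f (u j)) x = zm_sing h j].

Definition reg_factors l x : Prop :=
  [/\ dom x = zr X (hat u l), cod x = zr A l &
      forall l', hat (lift i) l' = l -> comp (zm_reg f l') x = zm_reg h l'].

Lemma sing_factors_exists j : exists x, sing_factors j x.
Proof.
have [|x [dom_x cod_x fx]] := iso_factor (y := zm_sing h j) (sing_iso (u j)); first by arrows.
by exists x; split; rewrite ?dom_x ?cod_x; arrows.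
Qed.

Lemma sing_factors_unique j x y : sing_factors j x -> sing_factors j y -> x = y.
Proof.
case=> _ cod_x fx [_ cod_y fy].
by apply: (iso_monic (sing_iso (u j))); rewrite ?cod_x ?cod_y ?fx ?fy; arrows.
Qed.

Lemma h_square : comp (zx B i) (zm_reg h (widen_ord (leqnSn n.+1) i)) =
  comp (zx' B i) (zm_reg h (lift ord0 i)).
Proof. by apply: zm_empty => j; rewrite h_face => /esym/eqP; rewrite (negbTE (neq_lift i _)). Qed.

Lemma reg_factors_exists_unique l :
  exists x, reg_factors l x /\ forall y, reg_factors l y -> y = x.
Proof.
case: (eqVneq l i) => [->|l_neq].
- have [_ [_ pb_univ]] := square_pullback.
  have [x [dom_x cod_x x1 x2 x_unique]] :=
    pb_univ (zm_reg h (widen_ord (leqnSn n.+1) i)) (zm_reg h (lift ord0 i))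
      ltac:(by arrows) ltac:(by arrows) ltac:(by arrows) h_square.
  exists x; split.
  + split; rewrite ?dom_x ?cod_x; try by arrows.
    by move=> l' /eqP; rewrite hat_lift_eq_i => /orP [] /eqP ->.
  + move=> y [dom_y cod_y fy]; apply: x_unique; rewrite ?dom_y ?cod_y ?fy //; arrows.
- have l'_iso : is_iso (zm_reg f (lift (lift ord0 i) l)).
    by apply: reg_iso; move: l_neq; rewrite -val_eqE /= /bump; lia.
  have [|x [dom_x cod_x fx]] := iso_factor (y := zm_reg h (lift (lift ord0 i) l)) l'_iso.
    by arrows.
  exists x; split.
  + split; rewrite ?dom_x ?cod_x; try by arrows.
    by move=> l'' /hat_lift_fibre ->.
  + move=> y [_ cod_y fy]; apply: (iso_monic l'_iso); rewrite ?cod_y ?cod_x ?fx ?fy //; arrows.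
Qed.

Lemma reg_factors_exists l : exists x, reg_factors l x.
Proof. by have [x [? _]] := reg_factors_exists_unique l; exists x. Qed.

Lemma reg_factors_unique l x y : reg_factors l x -> reg_factors l y -> x = y.
Proof.
have [z [_ z_unique]] := reg_factors_exists_unique l.
by move=> /z_unique -> /z_unique ->.
Qed.

Definition cart_sing j : Mor C :=
  proj1_sig (constructive_indefinite_description _ (sing_factors_exists j)).

Definition cart_reg l : Mor C :=
  proj1_sig (constructive_indefinite_description _ (reg_factors_exists l)).

Lemma cart_singP j : sing_factors j (cart_sing j).
Proof. exact: proj2_sig. Qed.

Lemma cart_regP l : reg_factors l (cart_reg l).
Proof. exact: proj2_sig. Qed.

Lemma cart_sing_dom j : dom (cart_sing j) = zs X j.
Proof. by case: (cart_singP j). Qed.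

Lemma cart_sing_cod j : cod (cart_sing j) = zs A (u j).
Proof. by case: (cart_singP j). Qed.

Lemma cart_reg_dom l : dom (cart_reg l) = zr X (hat u l).
Proof. by case: (cart_regP l). Qed.

Lemma cart_reg_cod l : cod (cart_reg l) = zr A l.
Proof. by case: (cart_regP l). Qed.

#[local] Hint Rewrite cart_sing_dom cart_sing_cod cart_reg_dom cart_reg_cod : arrows.

Lemma f_cart_sing j : comp (zm_sing f (u j)) (cart_sing j) = zm_sing h j.
Proof. by case: (cart_singP j). Qed.

Lemma f_cart_reg l' : comp (zm_reg f l') (cart_reg (hat (lift i) l')) = zm_reg h l'.
Proof. by case: (cart_regP (hat (lift i) l')) => _ _; apply. Qed.

Lemma cart_least i0 p : u p = i0 -> (forall j, u j = i0 -> p <= j) ->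
  comp (cart_sing p) (zx X p) = comp (zx A i0) (cart_reg (widen_ord (leqnSn n) i0)).
Proof.
move=> <- p_least; apply: (iso_monic (sing_iso (u p))); [by arrows | by arrows |].
reassoc_l; rewrite f_cart_sing (zm_least (h_face p)); last first.
  by move=> j; rewrite h_face => /lift_inj; apply: p_least.
reassoc_l; rewrite face_least; reassoc_r.
by rewrite -(hat_lift_widen i (u p)) f_cart_reg.
Qed.

Lemma cart_greatest i0 q : u q = i0 -> (forall j, u j = i0 -> j <= q) ->
  comp (cart_sing q) (zx' X q) = comp (zx' A i0) (cart_reg (lift ord0 i0)).
Proof.
move=> <- q_greatest; apply: (iso_monic (sing_iso (u q))); [by arrows | by arrows |].
reassoc_l; rewrite f_cart_sing (zm_greatest (h_face q)); last first.
  by move=> j; rewrite h_face => /lift_inj; apply: q_greatest.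
reassoc_l; rewrite face_greatest; reassoc_r.
by rewrite -(hat_lift_lift0 i (u q)) f_cart_reg.
Qed.

Lemma cart_middle i0 j j1 : val j1 = (val j).+1 -> u j = i0 -> u j1 = i0 ->
  comp (cart_sing j) (zx' X j) = comp (cart_sing j1) (zx X j1).
Proof.
move=> succ_j uj uj1.
apply: (iso_monic (sing_iso i0)); [by arrows; rewrite uj | by arrows; rewrite uj1 |].
rewrite !compA; try by arrows; rewrite ?uj ?uj1.
rewrite -{1}uj f_cart_sing -uj1 f_cart_sing.
by apply: (zm_middle (i := lift i i0)) succ_j _ _; rewrite h_face ?uj ?uj1.
Qed.

Lemma cart_empty i0 : (forall j, u j <> i0) ->
  comp (zx A i0) (cart_reg (widen_ord (leqnSn n) i0)) =
  comp (zx' A i0) (cart_reg (lift ord0 i0)).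
Proof.
move=> not_im; apply: (iso_monic (sing_iso i0)); [by arrows | by arrows |].
rewrite !compA; try by arrows.
rewrite face_least face_greatest -!compA; try by arrows.
rewrite -(hat_lift_widen i i0) -(hat_lift_lift0 i i0) !f_cart_reg.
by apply: zm_empty => j; rewrite h_face => /lift_inj; apply: not_im.
Qed.

Definition cart_map : zmap X A :=
  Build_zmap u_mono cart_reg_dom cart_reg_cod cart_sing_dom cart_sing_cod
    cart_least cart_greatest cart_middle cart_empty.

Lemma cart_map_comp : zcomp_eq f cart_map h.
Proof.
split=> /= [j | j | l]; first by rewrite f_u.
- by rewrite f_cart_sing.
- by rewrite hat_face f_cart_reg.
Qed.

Lemma cart_map_unique v : zcomp_eq f v h -> zm_s v =1 u -> v = cart_map.
Proof.
move=> [_ v_sing v_reg] v_u; apply: zmap_ext => //= [l | j].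
- apply: (@reg_factors_unique l); last exact: cart_regP.
  split; first by arrows; rewrite (hat_ext v_u).
  + by arrows.
  + by move=> l' <-; rewrite v_reg hat_face.
- apply: (@sing_factors_unique j); last exact: cart_singP.
  by split; arrows; rewrite ?v_sing v_u.
Qed.

End Lifting.

Theorem face_cartesian : pi_cartesian f.
Proof.
move=> k X h u u_mono f_u; exists (cart_map u_mono f_u); split=> //.
- exact: cart_map_comp.
- exact: cart_map_unique.
Qed.

End Sufficiency.

Section Necessity.
Hypothesis f_cart : pi_cartesian f.

Lemma face_reg_widen_dom : dom (zm_reg f (widen_ord (leqnSn n.+1) i)) = zr A i.
Proof. by arrows. Qed.

Lemma face_reg_lift0_dom : dom (zm_reg f (lift ord0 i)) = zr A i.
Proof. by arrows. Qed.

Let collapse_f : zigzag C n :=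
  collapse face_reg_widen_dom face_reg_lift0_dom (zm_reg_cod f _) (zm_reg_cod f _).
Let collapse_map_f : zmap collapse_f B :=
  collapse_map face_reg_widen_dom face_reg_lift0_dom (zm_reg_cod f _) (zm_reg_cod f _)
    face_square.

Definition factor_reg (l : 'I_n.+1) : Mor C :=
  if l == i then idm (zr A i) else zm_reg f (lift (lift ord0 i) l).

Definition face_factor : zmap A collapse_f.
Proof.
refine (@Build_zmap _ _ _ A collapse_f (fun j => j) factor_reg (zm_sing f)
  (@monotone_id n) _ _ _ _ _ _ _ _).
- by move=> l; rewrite hat_id // /factor_reg; case: eqP => [->|_]; arrows.
- by move=> l; rewrite /factor_reg /= /collapse_r; case: eqP => _; arrows.
- by move=> j; arrows.
- by move=> j; arrows.
- move=> i1 p <- _; rewrite face_least /= /collapse_x /factor_reg.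
  case: eqP => [e | /eqP ne]; last by rewrite lift_widen.
  have e' : widen_ord (leqnSn n.+1) (lift i p) = lift ord0 i.
    by apply/eqP; rewrite widen_lift_eq_lift0 e.
  rewrite e' comp_id_r //.
  by rewrite dom_comp; arrows; rewrite e'.
- move=> i1 q <- _; rewrite face_greatest /= /collapse_x' /factor_reg.
  case: eqP => [e | /eqP ne]; last by rewrite lift_lift0.
  have e' : lift ord0 (lift i q) = widen_ord (leqnSn n.+1) i.
    by apply/eqP; rewrite lift0_lift_eq_widen e.
  rewrite e' comp_id_r //.
  by rewrite dom_comp; arrows; rewrite e'.
- by move=> i1 j j1 succ_j /= ej ej1; move: succ_j; rewrite ej ej1; lia.
- by move=> i1 /(_ i1).
Defined.

Lemma face_factor_comp : zcomp_eq collapse_map_f face_factor f.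
Proof.
split=> /= [j | j | l']; first exact: f_face.
- by rewrite comp_id_l; arrows.
- rewrite /collapse_reg /factor_reg.
  case: (eqVneq l' (widen_ord (leqnSn n.+1) i)) => [-> | ne_widen].
    by rewrite hat_lift_widen_i eqxx comp_id_r; arrows.
  case: (eqVneq l' (lift ord0 i)) => [-> | ne_lift0].
    by rewrite hat_lift_lift0_i eqxx comp_id_r; arrows.
  have -> : (hat (lift i) l' == i) = false.
    by rewrite hat_lift_eq_i (negbTE ne_widen) (negbTE ne_lift0).
  by rewrite lift_hat_lift // comp_id_l; arrows.
Qed.

Lemma face_cartesian_isos :
  (forall j, is_iso (zm_sing f j)) /\
  (forall l' : 'I_n.+2, val l' <> val i -> val l' <> (val i).+1 -> is_iso (zm_reg f l')).
Proof.
have [v [v_lift v_id _]] :=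
  f_cart (h := collapse_map_f) (@monotone_id n) (fun j => f_face j).
have v_vert : forall j, zm_s v j = j := v_id.
(* [f] factors through [collapse_map_f] via [face_factor], so [v] after [face_factor] and the
   identity of [A] both lift [f] along the identity. *)
have v_factor : vcomp face_factor v_vert = zid A.
  apply: (cartesian_lift_unique f_cart) => //.
  - exact: zcomp_eq_vcomp v_lift face_factor_comp.
  - exact: zcomp_eq_id.
have [_ v_sing v_reg] := v_lift.
split=> [j | l' ne_i ne_i1].
- exists (zm_sing v j); do !split; try by arrows.
  + by rewrite zm_sing_dom; have /= := congr1 (fun w => zm_sing w j) v_factor.
  + by rewrite zm_sing_cod f_face; have /= := v_sing j; rewrite v_vert => ->.
- have ne_widen : l' != widen_ord (leqnSn n.+1) i by rewrite -val_eqE; apply/eqP.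
  have ne_lift0 : l' != lift ord0 i.
    by move: ne_i1; rewrite -val_eqE /= /bump => ne; apply/eqP; lia.
  have ne_hat : (hat (lift i) l' == i) = false.
    by rewrite hat_lift_eq_i (negbTE ne_widen) (negbTE ne_lift0).
  exists (zm_reg v (hat (lift i) l')); do !split.
  + by rewrite zm_reg_dom hat_id //= /collapse_r ne_hat lift_hat_lift ?zm_reg_cod.
  + by arrows.
  + have /= := congr1 (fun w => zm_reg w (hat (lift i) l')) v_factor.
    by rewrite /factor_reg ne_hat lift_hat_lift // zm_reg_dom hat_face.
  + have /= := v_reg l'; rewrite /collapse_reg (negbTE ne_widen) (negbTE ne_lift0) hat_face.
    by rewrite zm_reg_cod => ->.
Qed.

Section SpanFactor.
Variables (q1 q2 : Mor C).
Hypotheses (dom_q : dom q1 = dom q2) (q1_cod : cod q1 = zr B (widen_ord (leqnSn n.+1) i))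
  (q2_cod : cod q2 = zr B (lift ord0 i)) (q_square : comp (zx B i) q1 = comp (zx' B i) q2).

Let collapse_q : zigzag C n := collapse (erefl (dom q1)) (esym dom_q) q1_cod q2_cod.
Let h : zmap collapse_q B := collapse_map (erefl (dom q1)) (esym dom_q) q1_cod q2_cod q_square.

Definition span_factors x : Prop :=
  [/\ dom x = dom q1, cod x = zr A i,
      comp (zm_reg f (widen_ord (leqnSn n.+1) i)) x = q1 & comp (zm_reg f (lift ord0 i)) x = q2].

Lemma lift_span_factors v : zcomp_eq f v h -> (forall j, zm_s v j = j) ->
  span_factors (zm_reg v i).
Proof.
move=> [_ _ v_reg] v_vert; split; try by arrows; rewrite collapse_r_i.
- have /= := v_reg (widen_ord (leqnSn n.+1) i).
  by rewrite /collapse_reg eqxx hat_face hat_lift_widen_i => <-.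
- have /= := v_reg (lift ord0 i).
  by rewrite /collapse_reg lift0_neq_widen eqxx hat_face hat_lift_lift0_i => <-.
Qed.

(* Resetting the slice at [r_i] of a lift to another factorization of the span gives a second
   lift with the same singular map. *)
Lemma span_factors_lift v w :
  zcomp_eq f v h -> (forall j, zm_s v j = j) -> span_factors w -> w = zm_reg v i.
Proof.
move=> vh v_vert [dom_w cod_w fw1 fw2].
have [_ _ fv1 fv2] := lift_span_factors vh v_vert.
have [sing_iso _] := face_cartesian_isos.
have [x_w x'_w] := legs_at_i_eq sing_iso (x := w) (y := zm_reg v i)
  ltac:(by []) ltac:(by arrows) ltac:(by rewrite fw1 fv1) ltac:(by rewrite fw2 fv2).
have [v' [v's v'sing v'reg]] := zmap_update_reg (v := v) (l0 := i) (w := w)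
  ltac:(by rewrite dom_w; arrows; rewrite collapse_r_i) ltac:(by rewrite cod_w; arrows) x_w x'_w.
have v'h : zcomp_eq f v' h.
  have [hs hsing v_reg] := vh; split=> [j | j | l']; rewrite ?v's ?v'sing; first exact: hs.
  - exact: hsing.
  - rewrite v'reg; case: eqP => [/eqP | _]; last exact: v_reg.
    rewrite hat_face hat_lift_eq_i => /orP [] /eqP -> /=; rewrite /collapse_reg.
    + by rewrite eqxx fw1.
    + by rewrite lift0_neq_widen eqxx fw2.
have /(congr1 (fun z => zm_reg z i)) :=
  cartesian_lift_unique f_cart v'h vh (fun j => f_equal (fun s => s j) v's).
by rewrite v'reg eqxx.
Qed.

Lemma span_factors_exists_unique :
  exists x, span_factors x /\ forall y, span_factors y -> y = x.
Proof.
have [v [vh v_id _]] := f_cart (h := h) (@monotone_id n) (fun j => f_face j).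
exists (zm_reg v i); split; first exact: lift_span_factors.
by move=> y; apply: span_factors_lift.
Qed.

End SpanFactor.

Lemma face_cartesian_pullback :
  is_pullback (zm_reg f (widen_ord (leqnSn n.+1) i)) (zm_reg f (lift ord0 i))
              (zx B i) (zx' B i).
Proof.
split; first by split; arrows.
split; first exact: face_square.
move=> q1 q2 dom_q cod_q1 cod_q2 q_square.
have q1_cod : cod q1 = zr B (widen_ord (leqnSn n.+1) i) by rewrite cod_q1; arrows.
have q2_cod : cod q2 = zr B (lift ord0 i) by rewrite cod_q2; arrows.
have [x [[dom_x cod_x fx1 fx2] x_unique]] :=
  span_factors_exists_unique dom_q q1_cod q2_cod q_square.
exists x; split; rewrite ?cod_x; try by arrows.
by move=> y dom_y cod_y fy1 fy2; apply: x_unique; split; rewrite ?cod_y; try by arrows.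
Qed.

End Necessity.

End FaceMap.

Theorem lemma4p1 (C : Category) (n : nat) (i : 'I_n.+1)
    (A : zigzag C n) (B : zigzag C n.+1) (f : zmap A B)
    (Hf : zm_s f =1 lift i) :
  pi_cartesian f <->
  [/\ forall j : 'I_n, is_iso (zm_sing f j),
      forall j : 'I_n.+2, val j <> val i -> val j <> (val i).+1 ->
        is_iso (zm_reg f j) &
      is_pullback (zm_reg f (widen_ord (leqnSn n.+1) i)) (zm_reg f (lift ord0 i))
                  (zx B i) (zx' B i)].
Proof.
split=> [f_cart | [sing_iso reg_iso square_pullback]].
- have [sing_iso reg_iso] := face_cartesian_isos Hf f_cart.
  by split=> //; apply: face_cartesian_pullback.
- exact: face_cartesian Hf sing_iso reg_iso square_pullback.
Qed.
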